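(* Let $D=(E,\mathcal{F})$ be an even normal binary delta-matroid. Then ${}^{\partial}w_{D}(z)=mz^{k}$ for some integers $m,k$ (i.e. the twist polynomial has exactly one term) if and only if every connected component of the intersection graph $G_D$ is a complete graph of odd order.
   Context: A delta-matroid is a set system $(E,\mathcal{F})$, $\mathcal{F}\ne\emptyset$ a family of subsets of finite $E$, satisfying: for all $X,Y\in\mathcal{F}$ and $u\in X\Delta Y$ there is $v\in X\Delta Y$ with $X\Delta\{u,v\}\in\mathcal{F}$. Twist: $D*A=(E,\{A\Delta X:X\in\mathcal{F}\})$. Width $w(D)$ = maximum minus minimum cardinality of feasible sets; twist polynomial ${}^{\partial}w_{D}(z)=\sum_{A\subseteq E}z^{w(D*A)}$. $D$ is normal if $\emptyset\in\mathcal{F}$, and even if $|F\Delta F'|$ is even for all $F,F'\in\mathcal{F}$. For a symmetric matrix $C$ over $GF(2)$ indexed by $E$, $D(C)=(E,\{A\subseteq E: C[A]\text{ nonsingular}\})$ ($C[A]$ principal submatrix, $C[\emptyset]$ nonsingular by convention). $D$ is binary if some twist of it is isomorphic to some $D(C)$. A normal binary $D$ equals $D(C)$ for a unique symmetric $C$; its intersection graph $G_D$ has vertex set $E$, distinct $u,v$ adjacent iff $C_{u,v}=1$, and a loop at $v$ iff $C_{v,v}=1$. For even $D$, $G_D$ is a simple graph. *)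

From mathcomp Require Import all_boot all_order all_algebra.
Set Implicit Arguments. Unset Strict Implicit. Unset Printing Implicit Defensive.
Import GRing.Theory.

Section DeltaMatroids.
Variable T : finType.

Definition symdiff (X Y : {set T}) : {set T} := (X :\: Y) :|: (Y :\: X).

Definition is_delta_matroid (F : {set {set T}}) : Prop :=
  F != set0 /\
  forall X Y, X \in F -> Y \in F -> forall u, u \in symdiff X Y ->
    exists2 v, v \in symdiff X Y & symdiff X [set u; v] \in F.

Definition twist (F : {set {set T}}) (A : {set T}) : {set {set T}} :=
  [set symdiff A X | X in F].

Definition max_card (F : {set {set T}}) : nat := \max_(X in F) #|X|.
Definition min_card (F : {set {set T}}) : nat := \big[minn/#|T|]_(X in F) #|X|.

Definition width (F : {set {set T}}) : nat := max_card F - min_card F.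

Definition twist_poly (F : {set {set T}}) : {poly int} :=
  \sum_(A : {set T}) 'X^(width (twist F A)).

Definition normal (F : {set {set T}}) : Prop := set0 \in F.

Definition even_sys (F : {set {set T}}) : Prop :=
  forall X Y, X \in F -> Y \in F -> ~~ odd #|symdiff X Y|.

End DeltaMatroids.

Definition symmetric_mx (T : finType) (C : T -> T -> 'F_2) : Prop :=
  forall u v, C u v = C v u.

Definition principal_submx (T : finType) (C : T -> T -> 'F_2) (A : {set T})
  : 'M['F_2]_#|A| :=
  \matrix_(i, j) C (enum_val i) (enum_val j).

(* D(C): feasible sets are the A with C[A] nonsingular (C[set0] is the 0x0
   matrix, whose determinant is 1, so set0 is feasible). *)
Definition DC (T : finType) (C : T -> T -> 'F_2) : {set {set T}} :=
  [set A : {set T} | (\det (principal_submx C A) != 0)%R].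

Definition binary (T : finType) (F : {set {set T}}) : Prop :=
  exists (T' : finType) (f : T -> T') (C : T' -> T' -> 'F_2) (A : {set T}),
    [/\ bijective f, symmetric_mx C &
        [set f @: X | X : {set T} in twist F A] = DC C].

(* intersection graph of D(C): distinct u, v adjacent iff C u v = 1
   (loops are ignored; for even D there are none). *)
Definition igraph (T : finType) (C : T -> T -> 'F_2) : rel T :=
  fun u v => (u != v) && (C u v == 1%R).

Definition components_complete_odd (T : finType) (e : rel T) : Prop :=
  (forall u v, connect e u v -> u != v -> e u v) /\
  (forall u, odd #|[set v | connect e u v]|).

(* The twist polynomial has a single term iff
   all twists D*A have the same width, and since the empty set is feasible that
   common width is the maximum size M of a feasible set (one_term_width).

   Constant width says, via suitable twists: every vertex
   is missed by some feasible set of size M, every feasible pair meets all of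
   them, and every infeasible pair is missed by one of them.  Together with the
   exchange property of even delta-matroids this forces feasible pairs to be
   transitive (pair_trans).  Feasible pairs are the edges of G_D (DC_pair), so
   the components of G_D are cliques, and a feasible set of size M missing u
   contains the rest of u's component, which therefore has odd order.

   If the components of G_D are odd cliques, a set is
   feasible iff it meets every component evenly (DC_even_comp,
   DC_of_even_comp); for such a family the width of every twist equals
   |E| - #components (width_twist_components), so the polynomial is
   2^|E| z^(|E| - #components) (twist_poly_const). *)

From Pilot Require Import Defs.
From mathcomp Require Import all_boot all_order all_algebra.
From mathcomp Require Import zify.
Import GRing.Theory.
Set Implicit Arguments. Unset Strict Implicit. Unset Printing Implicit Defensive.

Section SetSystems.
Variable T : finType.
Implicit Types (A D P X Y : {set T}) (S : {set {set T}}).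

Lemma in_symdiff X Y z : (z \in symdiff X Y) = (z \in X) (+) (z \in Y).
Proof. by rewrite !inE; case: (z \in X); case: (z \in Y). Qed.

Lemma symdiffA X Y Z : symdiff X (symdiff Y Z) = symdiff (symdiff X Y) Z.
Proof. by apply/setP => t; rewrite !in_symdiff addbA. Qed.

Lemma symdiff0 X : symdiff set0 X = X.
Proof. by apply/setP => t; rewrite in_symdiff inE. Qed.

Lemma symdiff_eq0 X Y : (symdiff X Y == set0) = (X == Y).
Proof.
apply/eqP/eqP => [h|->]; last by apply/setP => t; rewrite in_symdiff inE addbb.
apply/setP => t; move/setP/(_ t): h.
by rewrite in_symdiff inE; case: (t \in X); case: (t \in Y).
Qed.

Lemma symdiffIr X Y K : symdiff X Y :&: K = symdiff (X :&: K) (Y :&: K).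
Proof.
by apply/setP => t; rewrite !(inE, in_symdiff); case: (t \in X); case: (t \in Y); case: (t \in K).
Qed.

Lemma setC_symdiff X Y : ~: symdiff X Y = symdiff (~: X) Y.
Proof. by apply/setP => t; rewrite !(inE, in_symdiff) addNb. Qed.

Lemma card_symdiff X Y : #|symdiff X Y| + 2 * #|X :&: Y| = #|X| + #|Y|.
Proof.
have -> : symdiff X Y = (X :|: Y) :\: (X :&: Y).
  by apply/setP => t; rewrite !(inE, in_symdiff); case: (t \in X); case: (t \in Y).
have := cardsUI X Y; have := cardsID (X :&: Y) (X :|: Y).
rewrite (setIidPr (subset_trans (subsetIl X Y) (subsetUl X Y))); lia.
Qed.

Lemma odd_symdiff X Y : odd #|symdiff X Y| = odd #|X| (+) odd #|Y|.
Proof. by rewrite -oddD -card_symdiff oddD oddM addbF. Qed.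

Lemma card_symdiff_le X Y Z : #|symdiff X Z| <= #|symdiff X Y| + #|symdiff Y Z|.
Proof.
rewrite -cardsUI; apply: leq_trans (leq_addr _ _); apply: subset_leq_card.
by apply/subsetP => t; rewrite !(inE, in_symdiff); case: (t \in X); case: (t \in Y).
Qed.

Lemma card_symdiff_sub D P : P \subset D -> #|symdiff D P| + #|P| = #|D|.
Proof. by move=> sPD; have := card_symdiff D P; rewrite (setIidPr sPD); lia. Qed.

(* Two sets of equal size differ by equally many elements on each side; so if
   Y has two elements outside X, then X has one outside Y avoiding any given y. *)
Lemma exists_in_diff X Y y : #|X| = #|Y| -> 1 < #|Y :\: X| -> exists u, u \in X :\: Y :\ y.
Proof.
move=> eXY two; apply/card_gt0P; have := cardsD1 y (X :\: Y); have := leq_b1 (y \in X :\: Y).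
by have := cardsID Y X; have := cardsID X Y; rewrite setIC eXY; lia.
Qed.

Lemma card_setI2 X u w : u != w -> #|X :&: [set u; w]| = (u \in X) + (w \in X).
Proof.
move=> uw; rewrite (cardsD1 u) (cardsD1 w) !inE !eqxx orbT orTb !andbT [w == u]eq_sym uw /=.
have -> : X :&: [set u; w] :\ u :\ w = set0.
  by apply/setP => t; rewrite !inE; case: (t == w); case: (t == u); rewrite ?andbF.
by rewrite cards0 addn0.
Qed.

Lemma max_card_ub S Y : Y \in S -> #|Y| <= Defs.max_card S.
Proof. exact: leq_bigmax_cond. Qed.

Lemma max_card_ex S : S != set0 -> exists2 Y, Y \in S & #|Y| = Defs.max_card S.
Proof. by rewrite -card_gt0 => /(eq_bigmax_cond (fun X => #|X|)) [Y]; exists Y. Qed.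

Lemma min_card_lb S Y : Y \in S -> min_card S <= #|Y|.
Proof.
move=> hY; rewrite /min_card -big_filter.
have : Y \in [seq X <- index_enum _ | X \in S] by rewrite mem_filter hY mem_index_enum.
elim: [seq _ <- _ | _] => // X r IH; rewrite inE big_cons.
by case/predU1P => [<-|/IH]; [exact: geq_minl | apply: leq_trans; exact: geq_minr].
Qed.

Lemma min_card_ex S : S != set0 -> exists2 Y, Y \in S & #|Y| = min_card S.
Proof.
case/set0Pn => Y0 hY0; exists [arg min_(Y < Y0 in S) #|Y|]; first by case: arg_minnP.
case: arg_minnP => // Y hY minY; apply/eqP; rewrite eqn_leq min_card_lb // andbT.
apply: (big_ind (fun m => #|Y| <= m)) => [|m n hm hn|X hX]; last exact: minY.
  exact: fintype.max_card.
by rewrite leq_min hm.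
Qed.

Lemma width_large S k : S != set0 -> (forall Y, Y \in S -> k <= #|Y|) ->
  exists2 Y, Y \in S & width S + k <= #|Y|.
Proof.
move=> hS hk; have [Y1 h1 e1] := max_card_ex hS; have [Y2 h2 e2] := min_card_ex hS.
by exists Y1 => //; have := hk _ h2; have := max_card_ub h2; rewrite /width; lia.
Qed.

Lemma width_small S Y0 Y : Y0 \in S -> Y \in S -> #|Y| <= width S + #|Y0|.
Proof.
move=> h0 hY; have := max_card_ub hY; have := max_card_ub h0; have := min_card_lb h0.
by rewrite /width; lia.
Qed.

Lemma in_twist S A Y : (Y \in twist S A) <-> exists2 X, X \in S & Y = symdiff A X.
Proof. by split => [/imsetP|] [X hX ->]; [exists X | apply: imset_f]. Qed.

Lemma twist_neq0 S A : S != set0 -> twist S A != set0.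
Proof. by case/set0Pn => X hX; apply/set0Pn; exists (symdiff A X); apply: imset_f. Qed.

Lemma twist0 S : twist S set0 = S.
Proof. by rewrite /twist (eq_imset _ symdiff0) imset_id. Qed.

(* In a normal set system the empty set is a smallest member. *)
Lemma width_normal S : normal S -> width S = Defs.max_card S.
Proof. by move=> S0; have := min_card_lb S0; rewrite cards0 leqn0 /width => /eqP ->; rewrite subn0. Qed.

End SetSystems.

Section TwistPolynomial.
Import Num.Theory.
Local Open Scope ring_scope.
Variable T : finType.
Implicit Types (S : {set {set T}}).

Lemma coef_twist_poly S n :
  (twist_poly S)`_n = #|[set A | width (twist S A) == n]|%:R.
Proof.
rewrite /twist_poly coef_sum -sumr_const [RHS]big_mkcond /=.
by apply: eq_bigr => A _; rewrite coefXn inE eq_sym; case: eqP.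
Qed.

Lemma one_term_width S (m : int) (k : nat) :
  twist_poly S = m%:P * 'X^k -> forall A, width (twist S A) = k.
Proof.
move=> hP A; apply/eqP; apply: contraT => hne.
have := congr1 (fun p : {poly int} => p`_(width (twist S A))) hP.
rewrite /= coef_twist_poly coefMXn coefC subn_eq0.
have -> : (if (width (twist S A) < k)%N then 0
           else if (width (twist S A) <= k)%N then m else 0) = 0 :> int.
  by move: hne; case: ltngtP.
move/eqP; rewrite pnatr_eq0 cards_eq0 => /eqP/setP/(_ A).
by rewrite !inE eqxx.
Qed.

Lemma twist_poly_const S k : (forall A, width (twist S A) = k) ->
  twist_poly S = (#|{set T}|%:Z)%:P * 'X^k.
Proof.
move=> hw; rewrite /twist_poly (eq_bigr (fun _ => 'X^k)) => [|A _]; last by rewrite hw.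
by rewrite sumr_const -mulr_natl -polyC_natr natz.
Qed.

End TwistPolynomial.

Section EvenDeltaMatroid.
Variables (T : finType) (F : {set {set T}}).
Implicit Types (P X Y : {set T}).
Hypotheses (dmF : is_delta_matroid F) (evenF : even_sys F) (normalF : normal F).

Let M := Defs.max_card F.

(* Evenness plus normality: all feasible sets have even size. *)
Lemma even_feasible X : X \in F -> ~~ odd #|X|.
Proof.
move=> hX; have := evenF hX normalF.
by have -> : symdiff X set0 = X by apply/setP => t; rewrite in_symdiff inE addbF.
Qed.

Lemma max_exchange X Y u : X \in F -> Y \in F -> #|X| = M -> u \in Y :\: X ->
  exists w, [/\ w \in X :\: Y, symdiff X [set u; w] \in F & #|symdiff X [set u; w]| = M].
Proof.
move=> hX hY cX; rewrite inE => /andP [uX uY].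
have uXY : u \in symdiff X Y by rewrite in_symdiff (negbTE uX) uY.
have [w] := dmF.2 X Y hX hY u uXY; rewrite in_symdiff => wXY Fw.
have wu : w != u.
  apply: contraTneq (even_feasible Fw) => ->.
  by rewrite negbK setUid odd_symdiff cards1 (negbTE (even_feasible hX)).
have hcard := card_symdiff X [set u; w].
rewrite cards2 eq_sym wu cX card_setI2 1?eq_sym // (negbTE uX) in hcard.
case wX: (w \in X) in wXY hcard.
  by exists w; rewrite !inE wX andbT -addTb wXY Fw; split=> //; lia.
by have := max_card_ub Fw; rewrite -/M; lia.
Qed.

Hypothesis widthF : forall A, width (twist F A) = M.

Lemma max_avoiding P : (forall Y, Y \in twist F P -> #|P| <= #|Y|) ->
  exists2 X, X \in F & #|X| = M /\ forall x, x \in P -> x \notin X.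
Proof.
move=> hP; have hF : F != set0 by apply/set0Pn; exists set0.
have [Y /in_twist [X hX ->]] := width_large (twist_neq0 P hF) hP.
have := card_symdiff P X; have := max_card_ub hX; rewrite widthF -/M => hM hc hl.
have /eqP : #|P :&: X| = 0 by lia.
rewrite cards_eq0 => /eqP hPX; exists X => //; split; first by lia.
by move=> x xP; apply/negP => xX; move/setP/(_ x): hPX; rewrite !inE xP xX.
Qed.

Lemma max_avoids x : exists2 X, X \in F & #|X| = M /\ x \notin X.
Proof.
have [X hX [cX hx]] : exists2 X, X \in F & #|X| = M /\ forall t, t \in [set x] -> t \notin X.
  apply: max_avoiding => Y /in_twist [X hX ->].
  by rewrite cards1 odd_gt0 // odd_symdiff cards1 (negbTE (even_feasible hX)).
by exists X => //; split=> //; apply: hx; rewrite set11.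
Qed.

Lemma max_avoids_pair x y : x != y -> [set x; y] \notin F ->
  exists2 X, X \in F & [/\ #|X| = M, x \notin X & y \notin X].
Proof.
move=> xy nFxy.
have [X hX [cX hx]] : exists2 X, X \in F & #|X| = M /\ forall t, t \in [set x; y] -> t \notin X.
  apply: max_avoiding => Y /in_twist [X hX ->]; rewrite cards2 xy.
  have : ~~ odd #|symdiff [set x; y] X|.
    by rewrite odd_symdiff cards2 xy (negbTE (even_feasible hX)).
  have : symdiff [set x; y] X != set0 by rewrite symdiff_eq0; apply: contraNneq nFxy => ->.
  by rewrite -card_gt0; case: #|_| => [|[|]].
by exists X => //; split; rewrite // hx // !inE eqxx ?orbT.
Qed.

Lemma max_meets_pair x y X : x != y -> [set x; y] \in F -> X \in F -> #|X| = M ->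
  (x \in X) || (y \in X).
Proof.
move=> xy Fxy hX cX; apply/negPn/negP; rewrite negb_or => /andP [xX yX].
have h0 : set0 \in twist F [set x; y].
  by apply/in_twist; exists [set x; y] => //; apply/esym/eqP; rewrite symdiff_eq0.
have := width_small h0 (imset_f (symdiff [set x; y]) hX).
have := card_symdiff [set x; y] X.
rewrite cards2 xy cards0 widthF -/M cX setIC card_setI2 // (negbTE xX) (negbTE yX).
lia.
Qed.

Lemma pair_trans x y z : x != y -> y != z -> x != z ->
  [set x; y] \in F -> [set y; z] \in F -> [set x; z] \in F.
Proof.
move=> xy yz xz Fxy Fyz; apply/negPn/negP => nFxz.
have [X0 h0 [c0 x0 z0]] := max_avoids_pair xz nFxz.
have y0 : y \in X0 by have := max_meets_pair xy Fxy h0 c0; rewrite (negbTE x0).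
pose B := [set X in F | (#|X| == M) && (y \notin X)].
have [Y1 h1 [c1 y1]] := max_avoids y.
have B1 : Y1 \in B by rewrite inE h1 c1 eqxx y1.
case: (@arg_minnP _ _ (fun X => X \in B) (fun X => #|symdiff X0 X|) B1) => X2 + minX2.
rewrite inE => /and3P [h2 /eqP c2 y2].
have x2 : x \in X2 by have := max_meets_pair xy Fxy h2 c2; rewrite (negbTE y2) orbF.
have z2 : z \in X2 by have := max_meets_pair yz Fyz h2 c2; rewrite (negbTE y2).
have [u] : exists u, u \in X0 :\: X2 :\ y.
  have : [set x; z] \subset X2 :\: X0.
    by apply/subsetP => t; rewrite !inE => /orP [] /eqP ->; rewrite ?x2 ?z2 ?(negbTE x0) ?(negbTE z0).
  by move/subset_leq_card; rewrite cards2 xz; apply: exists_in_diff; rewrite c0 c2.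
rewrite !inE => /and3P [uy u2 u0].
have uD : u \in X0 :\: X2 by rewrite inE u2 u0.
have [w [w2 F3 c3]] := max_exchange h2 h0 c2 uD.
move: w2; rewrite inE => /andP [w0 w2].
have uw : u != w by apply: contraNneq u2 => ->.
have B3 : symdiff X2 [set u; w] \in B.
  rewrite inE F3 c3 eqxx in_symdiff !inE (negbTE y2) (eq_sym y) (negbTE uy) /=.
  by apply: contraTneq w2 => <-.
have := minX2 _ B3; rewrite symdiffA leqNgt => /negP; apply.
have sub : [set u; w] \subset symdiff X0 X2.
  by apply/subsetP => t; rewrite in_symdiff !inE => /orP [] /eqP ->;
    rewrite ?u0 ?(negbTE u2) ?w2 ?(negbTE w0).
by have := card_symdiff_sub sub; rewrite cards2 uw => <-; rewrite -addn1 leq_add2l.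
Qed.

End EvenDeltaMatroid.

Section Components.
Variables (T : finType) (e : rel T).
Implicit Types (A X Y K : {set T}).

Definition component u : {set T} := [set v | connect e u v].
Definition components : {set {set T}} := [set component u | u : T].
Definition odd_components A : {set {set T}} := [set K in components | odd #|A :&: K|].
Definition even_on_components X : Prop := forall u, ~~ odd #|X :&: component u|.

Lemma mem_component u : u \in component u.
Proof. by rewrite inE connect0. Qed.

Lemma connect_adjacent : irreflexive e ->
  (forall x y z, e x y -> e y z -> x != z -> e x z) ->
  forall u v, connect e u v -> u != v -> e u v.
Proof.
move=> irr etr u v /connectP [p] + -> {v}.
elim: p u => [|y p IH] u /=; first by rewrite eqxx.
case/andP => euy hp nl; case: (eqVneq y (last y p)) => [<- //|ny].
exact: etr euy (IH y hp ny) nl.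
Qed.

Hypothesis e_sym : connect_sym e.

Lemma component_eq u v : connect e u v -> component u = component v.
Proof.
move=> uv; apply/setP => t; rewrite !inE; apply/idP/idP; last exact: connect_trans.
by apply: connect_trans; rewrite e_sym.
Qed.

Lemma in_components K y : K \in components -> y \in K -> component y = K.
Proof. by case/imsetP => u _ -> yK; apply/esym/component_eq; rewrite inE in yK. Qed.

Lemma odd_components_lb A Y :
  (forall u, odd #|Y :&: component u| = odd #|A :&: component u|) ->
  #|odd_components A| <= #|Y|.
Proof.
move=> par; apply: leq_trans (leq_imset_card component Y); apply: subset_leq_card.
apply/subsetP => K /setIdP [/imsetP [u _ ->] oddK].
have /card_gt0P [y /setIP [yY yu]] : 0 < #|Y :&: component u| by rewrite odd_gt0 // par.
by rewrite inE in yu; rewrite (component_eq yu) imset_f.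
Qed.

Lemma odd_components_delete A p : p \in A -> odd #|A :&: component p| ->
  odd_components (A :\ p) = odd_components A :\ component p.
Proof.
move=> pA oddp; apply/setP => K; rewrite !inE.
case Kc: (K \in components); rewrite ?andbF //=.
have -> : (A :\ p) :&: K = (A :&: K) :\ p by apply/setP => t; rewrite !inE andbA.
case: (eqVneq K (component p)) => [->|nK] /=.
  have pAK : p \in A :&: component p by rewrite inE pA mem_component.
  by move: oddp; rewrite (cardsD1 p) pAK oddD => /negbTE.
have pK : p \notin K by apply: contra nK => pK; rewrite -(in_components Kc pK).
by rewrite [#|A :&: K|](cardsD1 p) inE (negbTE pK) andbF.
Qed.

Lemma even_near A : exists2 X, even_on_components X & #|symdiff A X| <= #|odd_components A|.
Proof.
have [n] := ubnP #|odd_components A|; elim: n A => // n IH A.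
case: (set_0Vmem (odd_components A)) => [A0 _|[K KA] ltn].
  exists A => [u|]; last by rewrite (eqP (_ : symdiff A A == set0)) ?cards0 ?symdiff_eq0.
  apply/negP => oddu; have : component u \in odd_components A by rewrite inE imset_f.
  by rewrite A0 inE.
move: (KA); rewrite inE => /andP [Kc oddK].
have /card_gt0P [p /setIP [pA pK]] : 0 < #|A :&: K| by rewrite odd_gt0.
have Kp : component p = K := in_components Kc pK.
have del := odd_components_delete pA; rewrite Kp in del.
have lt : #|odd_components (A :\ p)| < n by move: ltn; rewrite del // (cardsD1 K) KA.
have [X evX hX] := IH (A :\ p) lt; exists X => //.
apply: leq_trans (card_symdiff_le A (A :\ p) X) _.
have -> : symdiff A (A :\ p) = [set p].
  apply/setP => t; rewrite in_symdiff !inE.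
  by case: (eqVneq t p) => [->|]; rewrite ?pA //=; case: (t \in A).
by rewrite cards1 [#|odd_components A|](cardsD1 K) KA !add1n ltnS -del.
Qed.

Hypothesis odd_component : forall u, odd #|component u|.

Lemma odd_setC_component Y u : odd #|~: Y :&: component u| = ~~ odd #|Y :&: component u|.
Proof.
move: (odd_component u); rewrite -(cardsID Y) setDE oddD !(setIC (component u)).
by case: (odd _); case: (odd _).
Qed.

(* All components being odd, A and its complement split them. *)
Lemma card_odd_components_compl A :
  #|odd_components A| + #|odd_components (~: A)| = #|components|.
Proof.
rewrite -(cardsID (odd_components A) components); congr (_ + _); apply: eq_card => K.
  by rewrite !inE; case: (K \in components).
rewrite !inE; case Kc: (K \in components); rewrite ?andbF //=.
by rewrite andbT; case/imsetP: Kc => u _ ->; exact: odd_setC_component.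
Qed.

Variable F : {set {set T}}.
Hypothesis F_even : forall X, X \in F <-> even_on_components X.

Lemma F_neq0 : F != set0.
Proof. by have [X /F_even XF _] := even_near set0; apply/set0Pn; exists X. Qed.

Lemma twist_parity A Y : Y \in twist F A ->
  forall u, odd #|Y :&: component u| = odd #|A :&: component u|.
Proof.
case/in_twist => X /F_even evX -> u.
by rewrite symdiffIr odd_symdiff (negbTE (evX u)) addbF.
Qed.

Lemma min_card_twist A : min_card (twist F A) = #|odd_components A|.
Proof.
apply/eqP; rewrite eqn_leq; apply/andP; split.
  have [X /F_even XF hX] := even_near A.
  by apply: leq_trans (min_card_lb _) hX; apply/in_twist; exists X.
have [Y YA <-] := min_card_ex (twist_neq0 A F_neq0).
exact: odd_components_lb (twist_parity YA).
Qed.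

Lemma max_card_twist A : Defs.max_card (twist F A) = #|T| - #|odd_components (~: A)|.
Proof.
apply/eqP; rewrite eqn_leq; apply/andP; split.
  have [Y YA <-] := max_card_ex (twist_neq0 A F_neq0).
  have := cardsC Y; have : #|odd_components (~: A)| <= #|~: Y|.
    apply: odd_components_lb => u.
    by rewrite !odd_setC_component (twist_parity YA).
  lia.
have [X /F_even XF hX] := even_near (~: A).
have YA : symdiff A X \in twist F A by apply/in_twist; exists X.
apply: leq_trans (max_card_ub YA).
by have := cardsC (symdiff A X); rewrite setC_symdiff; lia.
Qed.

Lemma width_twist_components A : width (twist F A) = #|T| - #|components|.
Proof.
by rewrite /width min_card_twist max_card_twist -(card_odd_components_compl A); lia.
Qed.

End Components.

Section BinaryMatrix.
Local Open Scope ring_scope.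
Variables (T : finType) (C : T -> T -> 'F_2).
Implicit Types (A X : {set T}) (w : T -> 'F_2).

Lemma F2_cases (c : 'F_2) : c = 0 \/ c = 1.
Proof. by case: c => [[|[|n]] Hn]; [left|right|]; try exact: val_inj. Qed.

Lemma F2_nat n : n%:R = (odd n)%:R :> 'F_2.
Proof. by rewrite -(Fp_nat_mod (_ : prime 2)) // modn2. Qed.

Definition kernel_trivial A : Prop :=
  forall w, (forall j, j \in A -> \sum_(i in A) w i * C i j = 0) ->
  forall i, i \in A -> w i = 0.

Lemma DC_kernel A : A \in DC C <-> kernel_trivial A.
Proof.
rewrite inE; split.
- move=> Hdet w Hw i Hi.
  pose v : 'rV['F_2]_#|A| := \row_k w (enum_val k).
  have v0 : v = 0.
    apply/eqP; apply: contraNT Hdet => nz; apply/det0P; exists v => //.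
    apply/rowP => k'; rewrite !mxE.
    rewrite -[RHS](Hw (enum_val k') (enum_valP k')) (big_enum_val (fun i => w i * C i (enum_val k'))).
    by apply: eq_bigr => k _; rewrite !mxE.
  have := congr1 (fun v : 'rV_#|A| => v 0 (enum_rank_in Hi i)) v0.
  by rewrite !mxE enum_rankK_in.
- move=> Hk; apply/negP => /det0P [v /eqP nz0 Hv]; apply: nz0.
  case: (posnP #|A|) => hA.
    by apply/rowP => k; have := ltn_ord k; rewrite {2}hA.
  have x0A := enum_valP (Ordinal hA).
  pose h := enum_rank_in x0A.
  apply/rowP => k; rewrite mxE.
  have := Hk (fun t => v 0 (h t)) _ (enum_val k) (enum_valP k).
  rewrite /h enum_valK_in; apply => j Hj.
  rewrite (big_enum_val (fun i => v 0 (enum_rank_in x0A i) * C i j)) /=.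
  transitivity ((v *m principal_submx C A) 0 (h j)); last by rewrite Hv mxE.
  rewrite mxE; apply: eq_bigr => k' _.
  by rewrite enum_valK_in !mxE /h enum_rankK_in.
Qed.

Lemma sum_set2 w u v : u != v -> \sum_(i in [set u; v]) w i = w u + w v.
Proof. by move=> uv; rewrite big_setU1 ?inE //= big_set1. Qed.

(* In an even normal D(C), no singleton is feasible, so C has zero diagonal. *)
Lemma DC_diag0 : even_sys (DC C) -> normal (DC C) -> forall u, C u u = 0.
Proof.
move=> hE hN u; case: (F2_cases (C u u)) => // h1.
have : [set u] \in DC C.
  apply/DC_kernel => w hw i; rewrite inE => /eqP ->.
  by have := hw u (set11 u); rewrite big_set1 h1 mulr1.
by move=> hu; have := even_feasible hE hN hu; rewrite cards1.
Qed.

Hypotheses (Csym : symmetric_mx C) (Cdiag : forall u, C u u = 0).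

Lemma igraph_connect_sym : connect_sym (igraph C).
Proof. by apply: sym_connect_sym => u v; rewrite /igraph eq_sym Csym. Qed.

Lemma DC_pair u v : u != v -> ([set u; v] \in DC C) = (C u v == 1).
Proof.
move=> uv; apply/idP/idP.
  move/DC_kernel => hk; case: (F2_cases (C u v)) => [h0|->] //.
  suff hw : forall j, j \in [set u; v] -> \sum_(i in [set u; v]) 1 * C i j = 0.
    by have /eqP := hk _ hw u (set21 u v); rewrite oner_eq0.
  move=> j; rewrite !inE sum_set2 // !mul1r => /orP [] /eqP ->.
    by rewrite Cdiag add0r Csym h0.
  by rewrite Cdiag addr0 h0.
move/eqP => h1; apply/DC_kernel => w hw i.
have := hw u (set21 u v); have := hw v (set22 u v).
rewrite !sum_set2 // !Cdiag !mulr0 add0r addr0 (Csym v u) h1 !mulr1 => hv hu.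
by rewrite !inE => /orP [] /eqP ->.
Qed.

Hypothesis Ccliques : forall u v, connect (igraph C) u v -> u != v -> igraph C u v.

Lemma C_comp i j : C i j = ((i != j) && connect (igraph C) i j)%:R.
Proof.
case: (eqVneq i j) => [->|ij] /=; first by rewrite Cdiag.
case hc: (connect _ i j); first by have := Ccliques hc ij; rewrite /igraph ij => /eqP.
by case: (F2_cases (C i j)) => // h1; move: hc; rewrite connect1 // /igraph ij h1.
Qed.

(* The kernel equation at j only involves the component of j. *)
Lemma column_sum X w j : j \in X ->
  \sum_(i in X) w i * C i j + w j = \sum_(i in X :&: component (igraph C) j) w i.
Proof.
move=> jX; rewrite [RHS](bigD1 j) /= ?inE ?jX ?connect0 // addrC; congr (_ + _).
rewrite big_mkcond [RHS]big_mkcond; apply: eq_bigr => i _.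
rewrite C_comp !inE (igraph_connect_sym j) andbC; case: (i \in X) => //=.
by case: (_ && _); rewrite ?mulr1 ?mulr0.
Qed.

Lemma DC_even_comp X u : X \in DC C -> ~~ odd #|X :&: component (igraph C) u|.
Proof.
move/DC_kernel => hk; apply/negP => hodd.
pose w i : 'F_2 := (connect (igraph C) u i)%:R.
have /card_gt0P [i] : (0 < #|X :&: component (igraph C) u|)%N by rewrite odd_gt0.
rewrite !inE => /andP [iX ui].
suff : w i = 0 by rewrite /w ui => /eqP; rewrite oner_eq0.
apply: hk iX => j jX; apply: (addIr (w j)); rewrite add0r column_sum // /w.
case uj: (connect (igraph C) u j).
  rewrite -(component_eq igraph_connect_sym uj) (eq_bigr (fun=> 1)) => [|t /setIP [_]].
    by rewrite sumr_const [LHS]F2_nat hodd.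
  by rewrite inE => ->.
rewrite big1 // => t /setIP [_]; rewrite inE => jt.
suff -> : connect (igraph C) u t = false by [].
by apply: contraFF uj => ut; apply: connect_trans ut _; rewrite igraph_connect_sym.
Qed.

Lemma DC_of_even_comp X : (forall u, ~~ odd #|X :&: component (igraph C) u|) -> X \in DC C.
Proof.
move=> hev; apply/DC_kernel => w hw.
pose s j := \sum_(i in X :&: component (igraph C) j) w i.
have ws j : j \in X -> w j = s j.
  by move=> jX; rewrite /s -column_sum // hw // add0r.
have s_comp j i : i \in component (igraph C) j -> s i = s j.
  by rewrite inE => ji; rewrite /s (component_eq igraph_connect_sym ji).
move=> j jX; rewrite ws // /s (eq_bigr (fun=> s j)) => [|i /setIP [iX ji]]; last first.
  by rewrite ws // (s_comp _ _ ji).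
by rewrite sumr_const -mulr_natr F2_nat (negbTE (hev j)) mulr0.
Qed.

End BinaryMatrix.

Section IntersectionGraph.
Variables (T : finType) (F : {set {set T}}) (C : T -> T -> 'F_2).
Hypotheses (dmF : is_delta_matroid F) (evenF : even_sys F) (normalF : normal F).
Hypotheses (Csym : symmetric_mx C) (FC : F = DC C).

Lemma C_diag0 u : C u u = 0%R.
Proof. by apply: DC_diag0; rewrite -FC. Qed.

Lemma pair_edge u v : u != v -> ([set u; v] \in F) = igraph C u v.
Proof. by move=> uv; rewrite FC (DC_pair Csym C_diag0 uv) /igraph uv. Qed.

Lemma constant_width_odd_cliques :
  (forall A, width (twist F A) = Defs.max_card F) -> components_complete_odd (igraph C).
Proof.
move=> widthF.
have edge_neq x y : igraph C x y -> x != y by case/andP.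
have cliques : forall u v, connect (igraph C) u v -> u != v -> igraph C u v.
  apply: connect_adjacent => [x|x y z exy eyz xz]; first by rewrite /igraph eqxx.
  have [xy yz] := (edge_neq _ _ exy, edge_neq _ _ eyz).
  by rewrite -pair_edge // (pair_trans dmF evenF normalF widthF xy yz xz) ?pair_edge.
split=> // u; change (odd #|component (igraph C) u|).
have [X XF [cX uX]] := max_avoids evenF normalF widthF u.
have nbrs : X :&: component (igraph C) u = component (igraph C) u :\ u.
  apply/setP => v; rewrite !inE; case: (eqVneq v u) => [->|vu] /=; first by rewrite (negbTE uX).
  case uv: (connect _ u v); rewrite ?andbF //= andbT; rewrite eq_sym in vu.
  have Fuv : [set u; v] \in F by rewrite pair_edge // cliques.
  by have := max_meets_pair widthF vu Fuv XF cX; rewrite (negbTE uX).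
have XD : X \in DC C by rewrite -FC.
have := DC_even_comp Csym C_diag0 cliques u XD; rewrite nbrs => ev.
by rewrite (cardsD1 u) mem_component oddD (negbTE ev).
Qed.

Lemma odd_cliques_width : components_complete_odd (igraph C) ->
  forall A, width (twist F A) = #|T| - #|components (igraph C)|.
Proof.
case=> cliques odd_comp A.
have F_even X : X \in F <-> even_on_components (igraph C) X.
  rewrite FC; split; last exact: DC_of_even_comp Csym C_diag0 cliques X.
  move=> XD u; exact: (DC_even_comp Csym C_diag0 cliques u XD).
exact: (width_twist_components (igraph_connect_sym Csym) odd_comp F_even A).
Qed.

End IntersectionGraph.

Theorem mainTheorem10 (T : finType) (F : {set {set T}}) :
  is_delta_matroid F -> even_sys F -> normal F -> binary F ->
  forall C : T -> T -> 'F_2, symmetric_mx C -> F = DC C ->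
  ((exists (m : int) (k : nat), twist_poly F = (m%:P * 'X^k)%R) <->
   components_complete_odd (igraph C)).
Proof.
move=> dmF evenF normalF _ C Csym FC; split.
  case=> m [k hP]; apply: (constant_width_odd_cliques dmF evenF normalF Csym FC) => A.
  by rewrite (one_term_width hP A) -(one_term_width hP set0) twist0 width_normal.
move=> odd_cliques; do 2 eexists; apply: twist_poly_const.
exact: (odd_cliques_width evenF normalF Csym FC odd_cliques).
Qed.
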